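(* Let $T$ be a transaction that has not written key $k$ (i.e. no version of $k$ is in $T.writeset$), let $R$ be an Atomic Readset of committed key versions read by $T$, and suppose $R$ contains a version $k_m$ of $k$. If the AtomicRead procedure on input $k$ and $R$ returns a version $k_j$, then $j = m$, i.e. $k_j = k_m$.
   Context: Transactions $T_i$ are identified by IDs $i$ drawn from a totally ordered set of positive values; $0$ is a lower bound below all IDs. $k_i$ denotes the version of key $k$ written by transaction $T_i$ (a transaction writes at most one committed version of each key). $T_i.writeset$ is the set of key versions written by $T_i$, and $k_i.cowritten := T_i.writeset$ (so $k_i \in k_i.cowritten$). Atomic Readset: a set $R$ of key versions is an Atomic Readset if for every $k_i \in R$ and every $l_i \in k_i.cowritten$, if $R$ contains a version $l_j$ of key $l$ then $j \geq i$. AtomicRead procedure: input a key $k$ and a set $R$ of key versions; $\mathrm{KVI}[k]$ is a finite set of IDs of committed transactions that wrote key $k$. (1) Set $lower := \max(\{0\} \cup \{ i : l_i \in R \text{ for some key } l,\ k \in l_i.cowritten\})$. (2) If $\mathrm{KVI}[k]$ is empty and $lower = 0$, return NULL. (3) Consider candidate IDs $t \in \mathrm{KVI}[k]$ with $t \geq lower$ in decreasing order; $t$ is valid if there is no $l_t \in k_t.cowritten$ such that $R$ contains a version $l_j$ with $j < t$. Let $target$ be the largest valid candidate. (4) If none is valid return NULL; otherwise return $k_{target}$ and the new read set $R \cup \{k_{target}\}$. *)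

From mathcomp Require Import all_boot.
Set Implicit Arguments. Unset Strict Implicit. Unset Printing Implicit Defensive.

(* Transaction IDs are positive naturals; 0 is the lower bound below all IDs.  W i : seq K is the writeset (keys written)
   of committed transaction T_i.  A key version k_i is the pair (k, i). *)

Section Model.
Variable K : eqType.
Variable W : nat -> seq K.

Definition version := (K * nat)%type.

Definition cowritten (v : version) : seq version := [seq (l, v.2) | l <- W v.2].

Definition atomic_readset (R : seq version) : Prop :=
  forall v, v \in R -> forall w, w \in cowritten v ->
  forall u, u \in R -> u.1 = w.1 -> w.2 <= u.2.

Definition lower (k : K) (R : seq version) : nat :=
  \max_(v <- R | (k, v.2) \in cowritten v) v.2.

Definition valid (k : K) (R : seq version) (t : nat) : bool :=
  ~~ has (fun w : version => has (fun u : version => (u.1 == w.1) && (u.2 < t)) R)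
         (cowritten (k, t)).

(* AtomicRead(k, R), with KVI : K -> seq nat the key-version index.
   Returns None for NULL, or Some (k_target, R ∪ {k_target}). *)
Definition atomic_read (KVI : K -> seq nat) (k : K) (R : seq version)
  : option (version * seq version) :=
  let lo := lower k R in
  if (KVI k == [::]) && (lo == 0) then None else
  let cands := [seq t <- KVI k | (lo <= t) && valid k R t] in
  if cands is [::] then None else
  let target := \max_(t <- cands) t in
  Some ((k, target), (k, target) :: R).

End Model.

From mathcomp Require Import all_boot.

Set Implicit Arguments.
Unset Strict Implicit.
Unset Printing Implicit Defensive.

(** The version [k_m] already in [R] pins the returned target from both sides:
    [T_m] wrote [k], so [m] is counted in [lower] and the target is at least [m];
    the target transaction also wrote [k], so a target above [m] would be
    invalidated by [k_m] itself. *)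

Lemma mem_bigmax_cons (c : nat) (s : seq nat) : \max_(t <- c :: s) t \in c :: s.
Proof.
elim: s c => [|c' s IHs] c; first by rewrite big_cons big_nil maxn0 mem_head.
by rewrite big_cons /maxn; case: ltnP => _; [rewrite inE IHs orbT | rewrite mem_head].
Qed.

Section AtomicRead.

Variables (K : eqType) (W : nat -> seq K).

Lemma mem_cowritten (l : K) (v : version K) :
  ((l, v.2) \in cowritten W v) = (l \in W v.2).
Proof. by rewrite mem_map // => x y []. Qed.

Lemma leq_lower (k : K) (R : seq (version K)) (v : version K) :
  v \in R -> k \in W v.2 -> v.2 <= lower W k R.
Proof.
by move=> vR kWv; apply: leq_bigmax_seq vR _; rewrite /= mem_cowritten.
Qed.

Lemma valid_leq (k : K) (R : seq (version K)) (t : nat) (u : version K) :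
  valid W k R t -> u \in R -> u.1 \in W t -> t <= u.2.
Proof.
move=> /hasPn valid_t uR uWt; rewrite leqNgt; apply/negP => lt_u_t.
have ut_cowritten : (u.1, t) \in cowritten W (k, t) by rewrite (mem_cowritten _ (k, t)).
by apply: (negP (valid_t _ ut_cowritten)); apply/hasP; exists u => //=; rewrite eqxx lt_u_t.
Qed.

Lemma atomic_read_target (KVI : K -> seq nat) (k k' : K) (R R' : seq (version K))
    (t : nat) :
  atomic_read W KVI k R = Some ((k', t), R') ->
  [/\ k' = k, t \in KVI k, lower W k R <= t & valid W k R t].
Proof.
rewrite /atomic_read; case: ifP => // _.
case cands_def: [seq t <- KVI k | _] => [|c cs] //= [<- <- _].
have := mem_bigmax_cons c cs; rewrite -cands_def mem_filter.
by case/andP=> /andP[lo_t valid_t] t_KVI.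
Qed.

End AtomicRead.

Theorem corollary1 (K : eqType) (W : nat -> seq K) (KVI : K -> seq nat)
  (TW : seq K) (k : K) (R : seq (K * nat)) (m j : nat) (R' : seq (K * nat)) :
  (* KVI[k'] consists of IDs of committed transactions that wrote k' *)
  (forall k' t, t \in KVI k' -> 0 < t /\ k' \in W t) ->
  (* T has not written k *)
  k \notin TW ->
  (* R consists of committed key versions *)
  (forall v, v \in R -> 0 < v.2 /\ v.1 \in W v.2) ->
  atomic_readset W R ->
  (k, m) \in R ->
  atomic_read W KVI k R = Some ((k, j), R') ->
  j = m.
Proof.
move=> KVI_written _ R_committed _ km_R /atomic_read_target[_ j_KVI lo_j valid_j].
have [_ kWm] := R_committed _ km_R.
have [_ kWj] := KVI_written _ _ j_KVI.
apply/eqP; rewrite eqn_leq (valid_leq valid_j km_R kWj) /=.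
exact: leq_trans (leq_lower km_R kWm) lo_j.
Qed.
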